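(* The proportional-cumulative is the unique Level-SP PAF $\psi:\mathcal P^N\to\mathcal P$ satisfying proportionality, where the proportional-cumulative is the PAF whose associated CAF is $$\Psi(\mathbf P)(a)=\operatorname{median}\Big(P_1(a),\dots,P_n(a),\tfrac1n,\tfrac2n,\dots,\tfrac{n-1}n\Big)\quad(a\in\Lambda,\ \mathbf P\in\mathcal C^N).$$
   Context: Let $N=\{1,\dots,n\}$, $\Lambda\subseteq\mathbb R$ a nonempty Borel set, $\mathcal P$ the Borel probability measures on $\Lambda$, $\mathcal C$ the CDFs on $\Lambda$, $\pi(p)(a)=p(\{x\in\Lambda:x\le a\})$. A PAF is a map $\psi:\mathcal P^N\to\mathcal P$ with associated CAF $\Psi$ given by $\Psi(\pi(p_1),\dots,\pi(p_n))=\pi(\psi(p_1,\dots,p_n))$; $P_i=\pi(p_i)$. $\mathbf z_{-i}(z_i')$ is $\mathbf z$ with $i$-th coordinate replaced by $z_i'$. $\psi$ is Level-SP if for every $i$, $\mathbf P$, $P_i'$, $a$: $P_i(a)<\Psi(\mathbf P)(a)\Rightarrow\Psi(\mathbf P)(a)\le\Psi(\mathbf P_{-i}(P_i'))(a)$ and $P_i(a)>\Psi(\mathbf P)(a)\Rightarrow\Psi(\mathbf P)(a)\ge\Psi(\mathbf P_{-i}(P_i'))(a)$. $\psi$ satisfies proportionality if $\psi(\delta_{a_1},\dots,\delta_{a_n})=\frac1n\sum_{i\in N}\delta_{a_i}$ for all $(a_1,\dots,a_n)\in\Lambda^N$, where $\delta_a$ is the Dirac mass at $a$. The median of $2n-1$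 numbers is the $n$-th smallest. *)

From HB Require Import structures.
From mathcomp Require Import all_boot all_order all_algebra.
From mathcomp Require Import all_classical all_reals all_analysis.
Set Implicit Arguments. Unset Strict Implicit. Unset Printing Implicit Defensive.
Import Order.TTheory GRing.Theory Num.Theory.
Local Open Scope classical_set_scope.
Local Open Scope ring_scope.

(* Probability measures on Lambda are represented as Borel probability
   measures on R concentrated on the Borel set Lambda (L). *)
Definition onL (R : realType) (L : set R) (p : probability R R) : Prop :=
  p (~` L) = 0%E.

Definition cdf (R : realType) (L : set R) (p : probability R R) (a : R) : \bar R :=
  p (L `&` `]-oo, a]).

Definition repl (R : realType) (n : nat) (ps : 'I_n -> probability R R)
  (i : 'I_n) (q : probability R R) : 'I_n -> probability R R :=
  fun j => if j == i then q else ps j.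

Definition isPAF (R : realType) (n : nat) (L : set R)
  (psi : ('I_n -> probability R R) -> probability R R) : Prop :=
  forall ps, (forall i, onL L (ps i)) -> onL L (psi ps).

Definition LevelSP (R : realType) (n : nat) (L : set R)
  (psi : ('I_n -> probability R R) -> probability R R) : Prop :=
  forall (i : 'I_n) (ps : 'I_n -> probability R R) (q : probability R R) (a : R),
    (forall j, onL L (ps j)) -> onL L q -> L a ->
    ((cdf L (ps i) a < cdf L (psi ps) a)%E ->
        (cdf L (psi ps) a <= cdf L (psi (repl ps i q)) a)%E) /\
    ((cdf L (ps i) a > cdf L (psi ps) a)%E ->
        (cdf L (psi ps) a >= cdf L (psi (repl ps i q)) a)%E).

Definition proportional (R : realType) (n : nat) (L : set R)
  (psi : ('I_n -> probability R R) -> probability R R) : Prop :=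
  forall (a : 'I_n -> R) (ps : 'I_n -> probability R R),
    (forall i, L (a i)) ->
    (forall i A, measurable A -> ps i A = \d_(a i) A) ->
    forall A, measurable A ->
      psi ps A = (((n%:R)^-1 : R)%:E * \sum_(i < n) \d_(a i) A)%E.

(* median of a list of 2n-1 reals: the n-th smallest *)
Definition median (R : realType) (n : nat) (s : seq R) : R :=
  nth 0 (sort <=%R s) n.-1.

Definition isPropCum (R : realType) (n : nat) (L : set R)
  (psi : ('I_n -> probability R R) -> probability R R) : Prop :=
  forall ps, (forall i, onL L (ps i)) ->
    forall a, L a ->
      cdf L (psi ps) a =
        (median n ([seq fine (cdf L (ps i) a) | i <- enum 'I_n] ++
                   [seq k%:R / n%:R | k <- iota 1 n.-1]))%:E.

From Pilot Require Import Defs.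
From HB Require Import structures.
From mathcomp Require Import all_boot all_order all_algebra.
From mathcomp Require Import all_classical all_reals all_analysis.
From mathcomp Require Import lra.
Import Order.TTheory GRing.Theory Num.Theory.
Import numFieldTopology.Exports numFieldNormedType.Exports.
Local Open Scope classical_set_scope.
Local Open Scope ring_scope.
Set Implicit Arguments. Unset Strict Implicit. Unset Printing Implicit Defensive.

(* Write F_i for the cdf of voter i and pcmed(x) for the median of
   x_1, ..., x_n together with the phantom values 1/n, ..., (n-1)/n.

   1. Order statistics: pcmed(x) <= t iff at least n of the 2n-1 values are
      <= t.  Hence pcmed is monotone and 1-Lipschitz, lies between the
      extreme x_i, and is Level-SP: a value below (above) the median cannot
      move it down (up).  For x, t in [0,1], pcmed(x) = t as soon as
      #{i | x_i > t} <= n t <= #{i | x_i >= t}; on 0/1 values it is the mean.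
   2. Existence: G(a) = pcmed(F_1(a), ..., F_n(a)) is a cdf whose increments
      are dominated by those of F_1 + ... + F_n, so its Lebesgue-Stieltjes
      probability is dominated by p_1 + ... + p_n and lives on Lambda.  The
      properties of step 1 give Level-SP and proportionality.
   3. Uniqueness: fix a in Lambda.  Moving the voters one by one to Dirac
      masses at a or at some c > a, Level-SP bounds the aggregate at a by
      the two counts of step 1, evaluated by proportionality; if there is no
      such c, every cdf equals 1 at a. *)

Section OrderStatistics.
Variable R : realType.
Implicit Types (s u : seq R) (t : R).

Definition downclosed (P : pred R) : Prop := forall x y, x <= y -> P y -> P x.

Lemma nth_sorted_downclosed (P : pred R) (u : seq R) k :
  downclosed P -> sorted <=%R u -> (k < size u)%N ->
  P (nth 0 u k) = (k < count P u)%N.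
Proof.
move=> Pdn; elim: u k => [|x u IH] k //= su ks.
have su' : sorted <=%R u by exact: path_sorted su.
have x_min : all (fun y => x <= y) u.
  by apply: order_path_min => //; exact: le_trans.
case Px: (P x) => /=; first by case: k ks => [|k] ks //=; rewrite IH // ltnS.
have Pu y : y \in u -> P y = false.
  by move=> yu; apply/negP => Py; rewrite (Pdn _ _ (allP x_min y yu) Py) in Px.
have -> : count P u = 0%N.
  by apply/eqP; rewrite -leqn0 leqNgt -has_count; apply/hasP => -[y /Pu ->].
case: k ks => [|k] ks /=; first by rewrite Px.
by rewrite Pu // mem_nth.
Qed.

Lemma nth_sort_downclosed (P : pred R) s k :
  downclosed P -> (k < size s)%N ->
  P (nth 0 (sort <=%R s) k) = (k < count P s)%N.
Proof.
move=> Pdn ks; rewrite nth_sorted_downclosed //.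
- by move: (perm_sort <=%R s) => /permPl /permP ->.
- by apply: sort_sorted; exact: le_total.
- by rewrite size_sort.
Qed.

Lemma median_leP n s t : (0 < n)%N -> (n <= size s)%N ->
  (median n s <= t) = (n <= count (fun x : R => (x <= t)%R) s)%N.
Proof.
move=> n0 ns; rewrite /median (@nth_sort_downclosed (fun x : R => (x <= t)%R)).
- by rewrite prednK.
- by move=> x y xy; exact: le_trans.
- by rewrite prednK.
Qed.

Lemma median_ltP n s t : (0 < n)%N -> (n <= size s)%N ->
  (median n s < t) = (n <= count (fun x : R => (x < t)%R) s)%N.
Proof.
move=> n0 ns; rewrite /median (@nth_sort_downclosed (fun x : R => (x < t)%R)).
- by rewrite prednK.
- by move=> x y xy; exact: le_lt_trans.
- by rewrite prednK.
Qed.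

End OrderStatistics.

Section PhantomMedian.
Variables (R : realType) (n : nat).
Hypothesis n_gt0 : (0 < n)%N.

Definition phantoms : seq R := [seq k%:R / n%:R | k <- iota 1 n.-1].

Definition with_phantoms (x : 'I_n -> R) : seq R :=
  [seq x i | i <- enum 'I_n] ++ phantoms.

Definition pcmed (x : 'I_n -> R) : R := median n (with_phantoms x).

Definition replx (x : 'I_n -> R) (i : 'I_n) (y : R) : 'I_n -> R :=
  fun j => if j == i then y else x j.

Lemma n_le_size_with_phantoms x : (n <= size (with_phantoms x))%N.
Proof.
by rewrite size_cat !size_map -enumT size_enum_ord leq_addr.
Qed.

Lemma count_voters_le (P : pred R) (x : 'I_n -> R) :
  (count P [seq x i | i <- enum 'I_n] <= n)%N.
Proof. by apply: leq_trans (count_size _ _) _; rewrite size_map size_enum_ord. Qed.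

Lemma count_voters_all (P : pred R) (x : 'I_n -> R) :
  (forall i, P (x i)) -> count P [seq x i | i <- enum 'I_n] = n.
Proof.
by move=> Px; rewrite count_map (@eq_count _ _ predT) ?count_predT ?size_enum_ord.
Qed.

Lemma count_voters_predC (P : pred R) (x : 'I_n -> R) :
  count (predC P) [seq x i | i <- enum 'I_n] =
  (n - count P [seq x i | i <- enum 'I_n])%N.
Proof.
apply/eqP; rewrite -(eqn_add2l (count P [seq x i | i <- enum 'I_n])).
by rewrite subnKC ?count_voters_le // count_predC size_map size_enum_ord.
Qed.

Lemma count_voters_mono (x y : 'I_n -> R) (P Q : pred R) :
  (forall i, P (x i) -> Q (y i)) ->
  (count P [seq x i | i <- enum 'I_n] <= count Q [seq y i | i <- enum 'I_n])%N.
Proof.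
move=> PQxy; elim: (enum 'I_n) => //= i s IH; apply: leq_add => //.
by case Pxi: (P (x i)) => //=; rewrite PQxy.
Qed.

Lemma count_with_phantoms_le (x y : 'I_n -> R) (P Q : pred R) :
  (forall i, P (x i) -> Q (y i)) -> (forall v, P v -> Q v) ->
  (count P (with_phantoms x) <= count Q (with_phantoms y))%N.
Proof.
by move=> PQxy PQ; rewrite !count_cat leq_add ?sub_count ?count_voters_mono.
Qed.

Lemma pcmed_shift (x y : 'I_n -> R) e : 0 <= e ->
  (forall i, y i <= x i + e) -> pcmed y <= pcmed x + e.
Proof.
move=> e0 yxe; set m := pcmed x.
have : (n <= count (fun v : R => (v <= m)%R) (with_phantoms x))%N.
  by rewrite -median_leP // n_le_size_with_phantoms.
rewrite /pcmed median_leP // ?n_le_size_with_phantoms // => /leq_trans; apply.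
apply: count_with_phantoms_le => [i xm|v vm] /=.
  by apply: le_trans (yxe i) _; rewrite lerD2r.
by apply: le_trans vm _; rewrite lerDl.
Qed.

Lemma pcmed_mono (x y : 'I_n -> R) :
  (forall i, y i <= x i) -> pcmed y <= pcmed x.
Proof.
by move=> yx; rewrite -[pcmed x]addr0; apply: pcmed_shift => // i; rewrite addr0.
Qed.

Lemma pcmed_le_all (x : 'I_n -> R) t : (forall i, x i <= t) -> pcmed x <= t.
Proof.
move=> xt; rewrite /pcmed median_leP ?n_le_size_with_phantoms // count_cat.
by rewrite count_voters_all ?leq_addr.
Qed.

Lemma pcmed_ge_all (x : 'I_n -> R) t : (forall i, t <= x i) -> t <= pcmed x.
Proof.
move=> tx; rewrite leNgt /pcmed median_ltP ?n_le_size_with_phantoms //.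
rewrite count_cat -ltnNge.
have -> : count (fun v : R => (v < t)%R) [seq x i | i <- enum 'I_n] = 0%N.
  by rewrite count_map; apply/eqP; rewrite -leqn0 leqNgt -has_count;
     apply/hasP => -[i _] /=; rewrite ltNge tx.
by apply: leq_ltn_trans (count_size _ _) _; rewrite size_map size_iota prednK.
Qed.

Lemma pcmed_replx_below (x : 'I_n -> R) i y :
  x i < pcmed x -> pcmed x <= pcmed (replx x i y).
Proof.
move=> xi; rewrite leNgt {2}/pcmed median_ltP ?n_le_size_with_phantoms //.
apply/negP => h; suff : pcmed x < pcmed x by rewrite ltxx.
rewrite {2}/pcmed median_ltP ?n_le_size_with_phantoms //; apply: leq_trans h _.
by apply: count_with_phantoms_le => // j; rewrite /replx; case: eqP => [->|].
Qed.

Lemma pcmed_replx_above (x : 'I_n -> R) i y :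
  pcmed x < x i -> pcmed (replx x i y) <= pcmed x.
Proof.
move=> xi; rewrite {1}/pcmed median_leP ?n_le_size_with_phantoms //.
have : (n <= count (fun v : R => (v <= pcmed x)%R) (with_phantoms x))%N.
  by rewrite -median_leP // n_le_size_with_phantoms.
move/leq_trans; apply; apply: count_with_phantoms_le => // j; rewrite /replx.
by case: eqP => // -> /=; rewrite leNgt xi.
Qed.

End PhantomMedian.

Section PhantomMedianValue.
Variables (R : realType) (n : nat).
Hypothesis n_gt0 : (0 < n)%N.

Lemma count_phantoms_ge (P : pred R) u : (u <= n.-1)%N ->
  (forall k, (0 < k <= u)%N -> P (k%:R / n%:R)) -> (u <= count P (phantoms R n))%N.
Proof.
move=> un Pk; rewrite /phantoms -(subnKC un) iotaD map_cat count_cat.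
apply: leq_trans (leq_addr _ _); rewrite count_map.
have -> : count (preim (fun k : nat => k%:R / n%:R) P) (iota 1 u) = size (iota 1 u).
  apply/eqP; rewrite -all_count; apply/allP => k; rewrite mem_iota => /andP[k1 k2].
  by apply: Pk; rewrite k1 -ltnS -(add1n u).
by rewrite size_iota.
Qed.

Lemma count_phantoms_le (P : pred R) v : (0 < v <= n)%N ->
  (forall k, (v <= k)%N -> ~~ P (k%:R / n%:R)) -> (count P (phantoms R n) <= v.-1)%N.
Proof.
move=> /andP[v0 vn] nPk.
have vn' : (v.-1 <= n.-1)%N by rewrite -!subn1 leq_sub2r.
rewrite /phantoms -(subnKC vn') iotaD map_cat count_cat.
have -> : count P [seq k%:R / n%:R | k <- iota (1 + v.-1) (n.-1 - v.-1)] = 0%N.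
  apply/eqP; rewrite -leqn0 leqNgt -has_count; apply/hasP => -[w /mapP[k]].
  rewrite mem_iota add1n prednK // => /andP[vk _] -> Pk.
  by move: (nPk k vk); rewrite Pk.
by rewrite addn0; apply: leq_trans (count_size _ _) _; rewrite size_map size_iota.
Qed.

Variables (x : 'I_n -> R) (t : R).
Hypotheses (x01 : forall i, 0 <= x i <= 1) (t01 : 0 <= t <= 1).
Let votes := [seq x i | i <- enum 'I_n].

Lemma n_gt0R : 0 < n%:R :> R. Proof. by rewrite ltr0n. Qed.

Lemma pcmed_le_level :
  (count (fun v : R => (t < v)%R) votes)%:R <= n%:R * t -> pcmed x <= t.
Proof.
case/andP: t01 => t0 t1; set u := count _ votes => hu.
rewrite /pcmed median_leP ?n_le_size_with_phantoms // count_cat.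
have -> : count (fun w : R => (w <= t)%R) votes = (n - u)%N.
  by rewrite -count_voters_predC; apply: eq_count => w /=; rewrite leNgt.
have un : (u < n)%N.
  rewrite ltn_neqAle count_voters_le andbT; apply/eqP => un.
  have t_eq1 : t = 1.
    by apply/eqP; rewrite eq_le t1 -(ler_pM2l n_gt0R) mulr1 -{1}un.
  have u0 : u = 0%N.
    apply/eqP; rewrite -leqn0 leqNgt -has_count; apply/hasP => -[w /mapP[i _ ->]].
    by rewrite t_eq1 ltNge; case/andP: (x01 i) => _ ->.
  by move: n_gt0; rewrite -un u0.
have : (u <= count (fun w : R => (w <= t)%R) (phantoms R n))%N.
  apply: count_phantoms_ge; first by rewrite -ltnS prednK.
  move=> k /andP[_ ku] /=; rewrite ler_pdivrMr ?n_gt0R // mulrC.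
  by apply: le_trans hu; rewrite ler_nat.
by move/(leq_add (leqnn (n - u)))/(leq_trans _); apply; rewrite subnK // ltnW.
Qed.

Lemma pcmed_ge_level :
  n%:R * t <= (count (fun v : R => (t <= v)%R) votes)%:R -> t <= pcmed x.
Proof.
case/andP: t01 => t0 t1; set v := count _ votes => hv.
rewrite leNgt /pcmed median_ltP ?n_le_size_with_phantoms // count_cat -ltnNge.
have -> : count (fun w : R => (w < t)%R) votes = (n - v)%N.
  by rewrite -count_voters_predC; apply: eq_count => w /=; rewrite ltNge.
have v0 : (0 < v)%N.
  rewrite lt0n; apply/eqP => v0.
  have t_eq0 : t = 0.
    by apply/eqP; rewrite eq_le t0 andbT -(ler_pM2l n_gt0R) mulr0 -[0]/(0%:R) -v0.
  have : v = n by apply: count_voters_all => i; rewrite t_eq0; case/andP: (x01 i).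
  by move=> vn; move: n_gt0; rewrite -vn v0.
have vn : (v <= n)%N by apply: count_voters_le.
have : (count (fun w : R => (w < t)%R) (phantoms R n) <= v.-1)%N.
  apply: count_phantoms_le; first by rewrite v0 vn.
  move=> k vk /=; rewrite -leNgt ler_pdivlMr ?n_gt0R // mulrC.
  by apply: le_trans hv _; rewrite ler_nat.
move=> h; apply: (@leq_ltn_trans (n - v + v.-1)); first by rewrite leq_add2l.
by rewrite -subn1 addnBA // subnK // subn1 prednK.
Qed.

Lemma pcmed_level :
  (count (fun v : R => (t < v)%R) votes)%:R <= n%:R * t ->
  n%:R * t <= (count (fun v : R => (t <= v)%R) votes)%:R ->
  pcmed x = t.
Proof.
by move=> hu hv; apply/le_anti; rewrite pcmed_le_level // pcmed_ge_level.
Qed.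

End PhantomMedianValue.

Lemma pcmed01 (R : realType) n (x : 'I_n -> R) : (0 < n)%N ->
  (forall i, x i = 0 \/ x i = 1) -> pcmed x = (\sum_(i < n) x i) / n%:R.
Proof.
move=> n_gt0 x01.
have -> : \sum_(i < n) x i = (count (fun v : R => v == 1) [seq x i | i <- enum 'I_n])%:R.
  rewrite -big_enum /=; elim: (enum 'I_n) => [|i s IH]; first by rewrite big_nil.
  rewrite big_cons IH /= natrD; congr (_ + _).
  by case: (x01 i) => ->; rewrite ?eqxx // eq_sym (negbTE (oner_neq0 _)).
set c := count _ _.
have x01' i : 0 <= x i <= 1 by case: (x01 i) => ->; rewrite ?lexx ?ler01.
have nR0 := n_gt0R R n_gt0.
have c_le1 : c%:R / n%:R <= 1 :> R by rewrite ler_pdivrMr // mul1r ler_nat count_voters_le.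
apply: pcmed_level => //.
- by rewrite divr_ge0 ?ler0n.
- rewrite [n%:R * _]mulrC divfK ?gt_eqF // ler_nat; apply: count_voters_mono => i.
  by case: (x01 i) => -> //=; rewrite ltNge divr_ge0 ?ler0n.
- rewrite [n%:R * _]mulrC divfK ?gt_eqF // ler_nat; apply: count_voters_mono => i.
  by case: (x01 i) => -> //=; rewrite eq_sym oner_eq0.
Qed.

(* A probability on R in the sense of the statement lives on the canonical
   measurable structure of R, while Lebesgue-Stieltjes measures live on
   measurableTypeR R; both have the Borel sets as measurable sets, and toR/ofR
   carry probabilities between the two. *)
Section Transfer.
Variable R : realType.

Definition toR (mu : set (measurableTypeR R) -> \bar R) : set R -> \bar R := mu.

Section ToR.
Variable mu : probability (measurableTypeR R) R.
HB.instance Definition _ := isMeasure.Build _ R R (toR mu)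
  (measure0 mu) (measure_ge0 mu) (measure_semi_sigma_additive (s:=mu)).
HB.instance Definition _ :=
  Measure_isProbability.Build _ R R (toR mu) (probability_setT mu).
End ToR.

Definition ofR (P : set R -> \bar R) : set (measurableTypeR R) -> \bar R := P.

Section OfR.
Variable P : probability R R.
HB.instance Definition _ := isMeasure.Build _ (measurableTypeR R) R (ofR P)
  (measure0 P) (measure_ge0 P) (measure_semi_sigma_additive (s:=P)).
HB.instance Definition _ :=
  Measure_isProbability.Build _ (measurableTypeR R) R (ofR P) (probability_setT P).
End OfR.

End Transfer.

Section RealCdf.
Variable R : realType.
Implicit Types (p : probability R R) (a : R).

Definition idTR : measurableTypeR R -> R := idfun.
HB.instance Definition _ :=
  @isMeasurableFun.Build _ _ _ _ idTR (@measurable_id _ _ setT).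

Definition cdfR p a : R := fine (p `]-oo, a]%classic).

Lemma cdfRE p a : cdfR p a = fine (cdf (idTR : {RV (ofR p) >-> R}) a).
Proof. by []. Qed.

Lemma cdfR_EFin p a : p `]-oo, a]%classic = (cdfR p a)%:E.
Proof. by rewrite /cdfR fineK // fin_num_measure. Qed.

Lemma cdfR_ge0 p a : 0 <= cdfR p a.
Proof. by rewrite /cdfR fine_ge0. Qed.

Lemma cdfR_le1 p a : cdfR p a <= 1.
Proof. by rewrite -lee_fin -cdfR_EFin probability_le1. Qed.

Lemma cdfR_nd p : {homo cdfR p : x y / x <= y}.
Proof.
move=> x y xy; rewrite -lee_fin -!cdfR_EFin le_measure ?inE //.
by apply: subitvPr; rewrite bnd_simp.
Qed.

Lemma cdfR_rc p : right_continuous (cdfR p).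
Proof.
move=> a; rewrite cdfRE; apply: fine_cvg.
by rewrite fineK ?fin_num_measure //; exact: cdf_right_continuous.
Qed.

Lemma cdfR_Ny p : cdfR p @ -oo --> (0 : R).
Proof. exact/fine_cvg/(cvg_cdfNy0 (idTR : {RV (ofR p) >-> R})). Qed.

Lemma cdfR_y p : cdfR p @ +oo --> (1 : R).
Proof. exact/fine_cvg/(cvg_cdfy1 (idTR : {RV (ofR p) >-> R})). Qed.

Lemma prob_oc p x y : x <= y -> p `]x, y]%classic = (cdfR p y - cdfR p x)%:E.
Proof.
move=> xy.
have -> : `]x, y]%classic = `]-oo, y]%classic `\` `]-oo, x]%classic.
  by rewrite -[RHS]setCK setCD setCitvl setUC -[LHS]setCK setCitv.
rewrite measureD ?setIidr //.
- by rewrite EFinB -!cdfR_EFin.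
- by apply: subset_itvl; rewrite bnd_simp.
by rewrite -ge0_fin_numE // fin_num_measure.
Qed.

End RealCdf.

Section LebesgueStieltjes.
Variable R : realType.

Lemma LS_oc (f : cumulative R R) (x y : R) : x <= y ->
  lebesgue_stieltjes_measure f `]x, y]%classic = (f y - f x)%:E.
Proof.
move=> xy; rewrite /lebesgue_stieltjes_measure /measure_extension /=.
by rewrite measurable_mu_extE /= ?wlength_itv_bnd //; exact: is_ocitv.
Qed.

Lemma LS_unique (f : cumulative R R) (mu : {measure set (measurableTypeR R) -> \bar R}) :
  (forall x y, x <= y -> mu `]x, y]%classic = (f y - f x)%:E) ->
  forall A, measurable A -> lebesgue_stieltjes_measure f A = mu A.
Proof.
move=> muf; apply: lebesgue_stieltjes_measure_unique => I [[a b]] /= _ <-.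
have [ab | ba] := leP a b; last first.
  by rewrite set_itv_ge ?measure0 // bnd_simp -leNgt ltW.
by rewrite LS_oc // muf.
Qed.

Lemma LS_Ny (f : cumulativeBounded (0 : R) (1 : R)) r :
  lebesgue_stieltjes_measure f `]-oo, r]%classic = (f r)%:E.
Proof. exact: cdf_lebesgue_stieltjes_id. Qed.

End LebesgueStieltjes.

Lemma measure_onL (R : realType) d (T : measurableType d)
    (mu : {measure set T -> \bar R}) (L A : set T) :
  measurable L -> measurable A -> mu (~` L) = 0%E -> mu (L `&` A) = mu A.
Proof.
move=> mL mA muL0; rewrite (measureDI mu mA mL) setIC.
rewrite (@subset_measure0 _ _ _ mu (A `\` L) (~` L)) ?add0e //.
- exact: measurableD.
- exact: measurableC.
Qed.

(* The aggregated cdf G(a) = pcmed(F_1(a), ..., F_n(a)) of a profile is a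
   genuine cdf: nondecreasing, right-continuous, from 0 to 1.  Moreover its
   increments are dominated by those of the sum S = F_1 + ... + F_n, i.e.
   S - G is nondecreasing as well. *)
Section AggregatedCdf.
Variables (R : realType) (n' : nat).
Local Notation n := n'.+1.
Variable ps : 'I_n -> probability R R.

Definition agg_cdf (a : R) : R := pcmed (fun i => cdfR (ps i) a).
Definition sum_cdf (a : R) : R := \sum_(i < n) cdfR (ps i) a.
Definition agg_gap (a : R) : R := sum_cdf a - agg_cdf a.

Lemma agg_cdf_nd : {homo agg_cdf : x y / x <= y}.
Proof. by move=> x y xy; apply: pcmed_mono => // i; exact: cdfR_nd. Qed.

Lemma sum_cdf_nd : {homo sum_cdf : x y / x <= y}.
Proof. by move=> x y xy; apply: ler_sum => i _; exact: cdfR_nd. Qed.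

(* G(y) - G(x) <= S(y) - S(x) for x <= y, since each F_i rises by at most
   the total rise of S. *)
Lemma agg_gap_nd : {homo agg_gap : x y / x <= y}.
Proof.
move=> x y xy; rewrite /agg_gap.
suff : agg_cdf y <= agg_cdf x + (sum_cdf y - sum_cdf x) by lra.
apply: pcmed_shift => //; first by rewrite subr_ge0 sum_cdf_nd.
move=> i; rewrite -lerBlDl /sum_cdf -sumrB (bigD1 i) //= lerDl.
by apply: sumr_ge0 => j _; rewrite subr_ge0 cdfR_nd.
Qed.

Lemma agg_cdf_rc : right_continuous agg_cdf.
Proof.
move=> a; apply/cvgrPdist_le => e e0.
have near_i i : \forall y \near a^'+, `|cdfR (ps i) a - cdfR (ps i) y| <= e.
  exact: ((cvgrPdist_le _ _).1 (@cdfR_rc _ (ps i) a) e e0).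
have near_all : \forall y \near a^'+, forall i, `|cdfR (ps i) a - cdfR (ps i) y| <= e.
  exact: filter_forall.
near=> y.
have ay : a < y by near: y; exact: nbhs_right_gt.
have Fy : forall i, `|cdfR (ps i) a - cdfR (ps i) y| <= e by near: y.
have Gay : agg_cdf a <= agg_cdf y by apply: agg_cdf_nd; exact: ltW.
rewrite ler0_norm ?subr_le0 // opprB lerBlDl.
apply: pcmed_shift => //; first exact: ltW.
move=> i; move: (Fy i); rewrite ler0_norm; last by rewrite subr_le0 cdfR_nd // ltW.
by rewrite opprB lerBlDl addrC.
Unshelve. all: by end_near. Qed.

Lemma sum_cdf_rc : right_continuous sum_cdf.
Proof.
move=> a; apply: cvg_big => //; first exact: add_continuous.
by move=> i _; exact: cdfR_rc.
Qed.

Lemma agg_gap_rc : right_continuous agg_gap.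
Proof. by move=> a; apply: cvgB; [exact: sum_cdf_rc | exact: agg_cdf_rc]. Qed.

(* G is squeezed between 0 and S at -oo, and between 1 - sum (1 - F_i)
   and 1 at +oo. *)
Lemma agg_cdf_Ny : agg_cdf @ -oo --> (0 : R).
Proof.
apply: (@squeeze_cvgr _ _ _ _ (cst 0) sum_cdf); last 2 first.
- exact: cvg_cst.
- have -> : (0 : R) = \sum_(i < n) (0 : R) by rewrite big1.
  apply: cvg_big => //; first exact: add_continuous.
  by move=> i _; exact: cdfR_Ny.
near=> x; apply/andP; split; first by apply: pcmed_ge_all => // i; exact: cdfR_ge0.
apply: pcmed_le_all => // i; rewrite /sum_cdf (bigD1 i) //= lerDl.
by apply: sumr_ge0 => j _; exact: cdfR_ge0.
Unshelve. all: by end_near. Qed.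

Lemma agg_cdf_y : agg_cdf @ +oo --> (1 : R).
Proof.
pose gap a := \sum_(i < n) (1 - cdfR (ps i) a).
apply: (@squeeze_cvgr _ _ _ _ (fun a => 1 - gap a) (cst 1)); last 2 first.
- rewrite -[X in _ --> X]subr0; apply: cvgB; first exact: cvg_cst.
  have -> : (0 : R) = \sum_(i < n) (1 - 1 : R) by rewrite big1 // => i _; rewrite subrr.
  apply: cvg_big => //; first exact: add_continuous.
  by move=> i _; apply: cvgB; [exact: cvg_cst | exact: cdfR_y].
- exact: cvg_cst.
near=> x; apply/andP; split; last by apply: pcmed_le_all => // i; exact: cdfR_le1.
apply: pcmed_ge_all => // i; rewrite lerBlDr -lerBlDl /gap (bigD1 i) //= lerDl.
by apply: sumr_ge0 => j _; rewrite subr_ge0 cdfR_le1.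
Unshelve. all: by end_near. Qed.

End AggregatedCdf.

HB.instance Definition _ (R : realType) n' (ps : 'I_n'.+1 -> probability R R) :=
  isCumulative.Build R _ R (agg_cdf ps) (@agg_cdf_nd R n' ps) (@agg_cdf_rc R n' ps).
HB.instance Definition _ (R : realType) n' (ps : 'I_n'.+1 -> probability R R) :=
  isCumulativeBounded.Build R 0 1 (agg_cdf ps) (@agg_cdf_Ny R n' ps) (@agg_cdf_y R n' ps).
HB.instance Definition _ (R : realType) n' (ps : 'I_n'.+1 -> probability R R) :=
  isCumulative.Build R _ R (sum_cdf ps) (@sum_cdf_nd R n' ps) (@sum_cdf_rc R n' ps).
HB.instance Definition _ (R : realType) n' (ps : 'I_n'.+1 -> probability R R) :=
  isCumulative.Build R _ R (agg_gap ps) (@agg_gap_nd R n' ps) (@agg_gap_rc R n' ps).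

Section Existence.
Variables (R : realType) (n' : nat).
Local Notation n := n'.+1.
Variable L : set R.
Hypothesis mL : measurable L.

Definition prop_cum (ps : 'I_n -> probability R R) : probability R R :=
  toR (lebesgue_stieltjes_measure (agg_cdf ps)).

Definition sum_measure (ps : 'I_n -> probability R R) :=
  msum (fun k => (ofR (ps (inord k)) : {measure set (measurableTypeR R) -> \bar R})) n.

Lemma sum_measureE ps A : sum_measure ps A = (\sum_(i < n) ps i A)%E.
Proof. by rewrite /sum_measure /msum; apply: eq_bigr => i _; rewrite inord_val. Qed.

Lemma sum_measure_oc ps x y : x <= y ->
  sum_measure ps `]x, y]%classic = (sum_cdf ps y - sum_cdf ps x)%:E.
Proof.
move=> xy; rewrite sum_measureE (eq_bigr (fun i => (cdfR (ps i) y - cdfR (ps i) x)%:E)).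
  by rewrite sumEFin /sum_cdf sumrB.
by move=> i _; rewrite prob_oc.
Qed.

(* Since S = G + (S - G) with both summands cumulative, the aggregate is
   dominated by the sum of the individual measures. *)
Lemma prop_cum_le_sum ps A : measurable A ->
  (lebesgue_stieltjes_measure (agg_cdf ps) A <= sum_measure ps A)%E.
Proof.
move=> mA; set mu := lebesgue_stieltjes_measure (agg_cdf ps).
set la := lebesgue_stieltjes_measure (agg_gap ps).
have S_sum : lebesgue_stieltjes_measure (sum_cdf ps) A = sum_measure ps A.
  exact: LS_unique (@sum_measure_oc ps) A mA.
have S_split : lebesgue_stieltjes_measure (sum_cdf ps) A = measure_add mu la A.
  apply: LS_unique => // x y xy.
  transitivity (mu `]x, y]%classic + la `]x, y]%classic)%E; first exact: measure_addE.
  rewrite /mu /la !LS_oc // -EFinD; congr (_%:E).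
  by rewrite /reverse_coercion /= /agg_gap; lra.
have mu_la : measure_add mu la A = (mu A + la A)%E by exact: measure_addE.
rewrite -S_sum S_split; apply: (@le_trans _ _ (mu A + la A)%E).
  by rewrite leeDl.
by rewrite -mu_la.
Qed.

Lemma cdf_onL (p : probability R R) a : onL L p -> Defs.cdf L p a = (cdfR p a)%:E.
Proof. by move=> pL; rewrite /Defs.cdf measure_onL // /cdfR fineK // fin_num_measure. Qed.

Lemma prop_cum_PAF : isPAF L prop_cum.
Proof.
move=> ps psL; rewrite /onL; apply/eqP; rewrite eq_le measure_ge0 andbT.
apply: le_trans (prop_cum_le_sum ps (measurableC mL)) _.
by rewrite sum_measureE big1 // => i _; exact: psL.
Qed.

Lemma prop_cum_cdf ps a : (forall i, onL L (ps i)) ->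
  Defs.cdf L (prop_cum ps) a = (agg_cdf ps a)%:E.
Proof.
move=> psL; rewrite /Defs.cdf measure_onL //; last exact: prop_cum_PAF.
exact: LS_Ny.
Qed.

Lemma prop_cum_PropCum : isPropCum L prop_cum.
Proof.
move=> ps psL a _; rewrite prop_cum_cdf //; congr (_%:E).
rewrite /agg_cdf /pcmed /with_phantoms /phantoms; congr (median _ (_ ++ _)).
by apply: eq_map => i; rewrite cdf_onL.
Qed.

Lemma prop_cum_LevelSP : LevelSP L prop_cum.
Proof.
move=> i ps q a psL qL La.
have rL j : onL L (repl ps i q j) by rewrite /repl; case: eqP.
rewrite !prop_cum_cdf // cdf_onL // !lte_fin !lee_fin.
have -> : agg_cdf (repl ps i q) a = pcmed (replx (fun j => cdfR (ps j) a) i (cdfR q a)).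
  by congr pcmed; apply/funext => j; rewrite /repl /replx; case: eqP.
by split; [exact: pcmed_replx_below | exact: pcmed_replx_above].
Qed.

Lemma prop_cum_proportional : proportional L prop_cum.
Proof.
move=> b ps Lb psd A mA.
have cdf01 i z : cdfR (ps i) z = 0 \/ cdfR (ps i) z = 1.
  rewrite /cdfR psd // diracE.
  by case: (b i \in `]-oo, z]%classic); [right | left].
have G_mean z : agg_cdf ps z = sum_cdf ps z / n%:R.
  by rewrite /agg_cdf pcmed01 // => i; exact: cdf01.
have inv_ge0 : (0 <= (n%:R)^-1 :> R) by rewrite invr_ge0 ler0n.
pose r := NngNum inv_ge0.
transitivity (mscale r (sum_measure ps) A).
  apply: LS_unique => // x y xy.
  transitivity (r%:num%:E * sum_measure ps `]x, y]%classic)%E; first by [].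
  rewrite sum_measure_oc // -EFinM; congr (_%:E).
  by rewrite /reverse_coercion /= !G_mean mulrC mulrBl.
transitivity (r%:num%:E * sum_measure ps A)%E; first by [].
by rewrite sum_measureE; congr (_ * _)%E; apply: eq_bigr => i _; exact: psd.
Qed.

End Existence.

Lemma repl_same (R : realType) n (ps : 'I_n -> probability R R) j q :
  repl (repl ps j q) j (ps j) = ps.
Proof. by apply/funext => i; rewrite /repl; case: eqP => // ->. Qed.

(* The argument
   moves the voters one at a time to Dirac masses at a (cdf 1 at a) or at some
   c > a in Lambda (cdf 0 at a); Level-SP controls the direction in which the
   aggregate at a can move, and proportionality evaluates it at the end. *)
Section Uniqueness.
Variables (R : realType) (n' : nat).
Local Notation n := n'.+1.
Variable L : set R.
Hypothesis mL : measurable L.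
Variable psi : ('I_n -> probability R R) -> probability R R.
Hypothesis psi_SP : LevelSP L psi.
Hypothesis psi_prop : proportional L psi.
Variable a : R.
Hypothesis La : L a.

Local Notation cdfa p := (Defs.cdf L p a).

Lemma measurable_below : measurable (L `&` `]-oo, a]%classic).
Proof. exact: measurableI. Qed.

Lemma cdfa_fin (p : probability R R) : cdfa p = (fine (cdfa p))%:E.
Proof. by rewrite fineK // fin_num_measure //; exact: measurable_below. Qed.

Lemma cdfa_le1 (p : probability R R) : (cdfa p <= 1)%E.
Proof. by apply: probability_le1; exact: measurable_below. Qed.

Lemma fine_cdfa01 (p : probability R R) : 0 <= fine (cdfa p) <= 1.
Proof. by rewrite -!lee_fin -cdfa_fin cdfa_le1 measure_ge0. Qed.

Definition delta (b : R) : probability R R := \d_b.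

Lemma onL_dirac b : L b -> onL L (delta b).
Proof.
move=> Lb; transitivity (\d_b (~` L) : \bar R); first by [].
by rewrite diracE memNset //= => /(_ Lb).
Qed.

Lemma cdfa_dirac_at : cdfa (delta a) = 1%E.
Proof.
transitivity (\d_a (L `&` `]-oo, a]%classic) : \bar R); first by [].
by rewrite diracE mem_set //; split => //=; rewrite in_itv /=.
Qed.

Lemma cdfa_dirac_above c : a < c -> cdfa (delta c) = 0%E.
Proof.
move=> ac; transitivity (\d_c (L `&` `]-oo, a]%classic) : \bar R); first by [].
by rewrite diracE memNset //= => -[_]; rewrite in_itv /= leNgt ac.
Qed.

Lemma repl_onL (ps : 'I_n -> probability R R) j q :
  (forall i, onL L (ps i)) -> onL L q -> forall i, onL L (repl ps j q i).
Proof. by move=> psL qL i; rewrite /repl; case: eqP. Qed.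

(* Moving any voter to the Dirac mass at a never lowers the aggregate at a:
   from the new profile, that voter (at level 1) is above the aggregate,
   so moving back cannot raise it. *)
Lemma raise_voter (ps : 'I_n -> probability R R) j : (forall i, onL L (ps i)) ->
  (cdfa (psi ps) <= cdfa (psi (repl ps j (delta a))))%E.
Proof.
move=> psL; set ps' := repl ps j (delta a).
have [_ back] := psi_SP j (repl_onL j psL (onL_dirac La)) (psL j) La.
rewrite repl_same in back.
have [lt1|ge1] := ltP (cdfa (psi ps')) 1%E; last exact: le_trans (cdfa_le1 _) ge1.
by apply: back; rewrite /ps' /repl eqxx cdfa_dirac_at.
Qed.

Lemma lower_voter (ps : 'I_n -> probability R R) j c : L c -> a < c ->
  (forall i, onL L (ps i)) ->
  (cdfa (psi (repl ps j (delta c))) <= cdfa (psi ps))%E.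
Proof.
move=> Lc ac psL; set ps' := repl ps j (delta c).
have [back _] := psi_SP j (repl_onL j psL (onL_dirac Lc)) (psL j) La.
rewrite repl_same in back.
have [gt0|le0] := ltP 0%E (cdfa (psi ps')); last exact: le_trans le0 (measure_ge0 _ _).
by apply: back; rewrite /ps' /repl eqxx cdfa_dirac_above.
Qed.

Lemma cdfa_dirac_profile (ds : 'I_n -> probability R R) (b : 'I_n -> R) (P : pred 'I_n) :
  (forall i, L (b i)) -> (forall i A, measurable A -> ds i A = \d_(b i) A) ->
  (forall i, \d_(b i) (L `&` `]-oo, a]%classic) = ((P i)%:R)%:E :> \bar R) ->
  cdfa (psi ds) = ((n%:R)^-1 * (count P (enum 'I_n))%:R)%:E.
Proof.
move=> Lb dsb dsP; rewrite /Defs.cdf (psi_prop Lb dsb measurable_below).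
rewrite (eq_bigr (fun i => ((P i)%:R)%:E)); last by move=> i _; exact: dsP.
rewrite sumEFin -EFinM -big_enum /=; congr (_ * _)%:E.
by elim: (enum 'I_n) => [|i s IH]; rewrite ?big_nil // big_cons IH /= natrD.
Qed.

Variable ps : 'I_n -> probability R R.
Hypothesis psL : forall i, onL L (ps i).

Definition level j : R := fine (cdfa (ps j)).
Definition agg_level : R := fine (cdfa (psi ps)).

Lemma cdfa_level j : cdfa (ps j) = (level j)%:E.
Proof. exact: cdfa_fin. Qed.

Lemma cdfa_agg_level : cdfa (psi ps) = agg_level%:E.
Proof. exact: cdfa_fin. Qed.

Definition hybrid (ds : 'I_n -> probability R R) (k : nat) : 'I_n -> probability R R :=
  fun j => if (j < k)%N then ds j else ps j.

Lemma hybrid0 ds : hybrid ds 0 = ps.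
Proof. by apply/funext => j; rewrite /hybrid ltn0. Qed.

Lemma hybrid_n ds : hybrid ds n = ds.
Proof. by apply/funext => j; rewrite /hybrid ltn_ord. Qed.

Lemma hybrid_ge ds k : (n <= k)%N -> hybrid ds k.+1 = hybrid ds k.
Proof.
move=> nk; apply/funext => j; rewrite /hybrid.
by rewrite (leq_trans (ltn_ord j) nk) ltnS ltnW // (leq_trans (ltn_ord j)).
Qed.

Lemma hybridS ds k (kn : (k < n)%N) :
  hybrid ds k.+1 = repl (hybrid ds k) (Ordinal kn) (ds (Ordinal kn)).
Proof.
apply/funext => j; rewrite /hybrid /repl ltnS leq_eqVlt.
case: (eqVneq j (Ordinal kn)) => [->|neq] /=; first by rewrite eqxx.
suff -> : (nat_of_ord j == k) = false by [].
by apply/negbTE; apply: contra neq => /eqP jk; apply/eqP; exact: val_inj.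
Qed.

Lemma hybrid_onL ds k : (forall j, onL L (ds j)) -> forall j, onL L (hybrid ds k j).
Proof. by move=> dsL j; rewrite /hybrid; case: ifP. Qed.

Lemma hybrid_at ds k (kn : (k < n)%N) : hybrid ds k (Ordinal kn) = ps (Ordinal kn).
Proof. by rewrite /hybrid /= ltnn. Qed.

Section Pushes.
Variable c : R.
Hypotheses (Lc : L c) (ac : a < c).

(* Push every voter away from the aggregate: those below it to level 0
   (mass at c), the others to level 1 (mass at a); and the opposite push. *)
Definition push_away (j : 'I_n) : probability R R :=
  if level j < agg_level then delta c else delta a.
Definition push_toward (j : 'I_n) : probability R R :=
  if agg_level < level j then delta a else delta c.

(* Along the hybrids of push_away the aggregate never decreases: a voter
   below the aggregate is below it all along, so Level-SP applies to her;
   a voter sent to a only raises it. *)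
Lemma push_away_up k : (cdfa (psi ps) <= cdfa (psi (hybrid push_away k)))%E.
Proof.
have dsL j : onL L (push_away j) by rewrite /push_away; case: ifP => _; exact: onL_dirac.
elim: k => [|k IH]; first by rewrite hybrid0.
have [kn|nk] := ltnP k n; last by rewrite hybrid_ge.
rewrite hybridS; refine (le_trans IH _); rewrite /push_away; case: ifP => below.
  have [lift _] := psi_SP (Ordinal kn) (hybrid_onL k dsL) (onL_dirac Lc) La.
  by apply: lift; rewrite hybrid_at cdfa_level (lt_le_trans _ IH) // cdfa_agg_level lte_fin.
exact: raise_voter (hybrid_onL _ dsL).
Qed.

Lemma push_toward_down k : (cdfa (psi (hybrid push_toward k)) <= cdfa (psi ps))%E.
Proof.
have dsL j : onL L (push_toward j) by rewrite /push_toward; case: ifP => _; exact: onL_dirac.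
elim: k => [|k IH]; first by rewrite hybrid0.
have [kn|nk] := ltnP k n; last by rewrite hybrid_ge.
rewrite hybridS; refine (le_trans _ IH); rewrite /push_toward; case: ifP => above.
  have [_ drop] := psi_SP (Ordinal kn) (hybrid_onL k dsL) (onL_dirac La) La.
  by apply: drop; rewrite hybrid_at cdfa_level (le_lt_trans IH) // cdfa_agg_level lte_fin.
exact: lower_voter (hybrid_onL _ dsL).
Qed.

(* Evaluating the fully pushed profiles by proportionality: at least
   n * agg_level voters are weakly above the aggregate, and at most
   n * agg_level strictly above it. *)
Lemma count_weakly_above :
  n%:R * agg_level <= (count (fun v : R => (agg_level <= v)%R) [seq level i | i <- enum 'I_n])%:R.
Proof.
have := push_away_up n; rewrite hybrid_n cdfa_agg_level.
rewrite (@cdfa_dirac_profile push_away (fun i => if level i < agg_level then c else a)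
  (fun i => agg_level <= level i)).
- rewrite lee_fin count_map => agg_le; have n0 := n_gt0R R (ltn0Sn n').
  by rewrite -(@ler_pM2l _ (n%:R^-1)) ?invr_gt0 // mulrA mulVf ?mul1r ?gt_eqF.
- by move=> i; case: ifP.
- by move=> i A mA; rewrite /push_away; case: ifP.
move=> i /=; case: ifP => below; rewrite leNgt below /=.
  exact: cdfa_dirac_above.
exact: cdfa_dirac_at.
Qed.

Lemma count_strictly_above :
  (count (fun v : R => (agg_level < v)%R) [seq level i | i <- enum 'I_n])%:R <= n%:R * agg_level.
Proof.
have := push_toward_down n; rewrite hybrid_n cdfa_agg_level.
rewrite (@cdfa_dirac_profile push_toward (fun i => if agg_level < level i then a else c)
  (fun i => agg_level < level i)).
- rewrite lee_fin count_map => le_agg; have n0 := n_gt0R R (ltn0Sn n').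
  by rewrite -(@ler_pM2l _ (n%:R^-1)) ?invr_gt0 // mulrA mulVf ?mul1r ?gt_eqF.
- by move=> i; case: ifP.
- by move=> i A mA; rewrite /push_toward; case: ifP.
move=> i /=; case: ifP => above /=.
  exact: cdfa_dirac_at.
exact: cdfa_dirac_above.
Qed.

End Pushes.

Lemma cdfa_top (p : probability R R) : ~ (exists c, L c /\ a < c) -> onL L p ->
  cdfa p = 1%E.
Proof.
move=> top pL; rewrite /Defs.cdf; have -> : L `&` `]-oo, a]%classic = L `&` setT.
  apply/seteqP; split => x [Lx xa]; split => //=.
  by rewrite in_itv /= leNgt; apply/negP => ax; apply: top; exists x.
by rewrite measure_onL //; exact: probability_setT.
Qed.

Lemma psi_cdfa (psiL : isPAF L psi) : cdfa (psi ps) =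
  (median n ([seq fine (cdfa (ps i)) | i <- enum 'I_n] ++
             [seq k%:R / n%:R | k <- iota 1 n.-1]))%:E.
Proof.
rewrite cdfa_agg_level; congr (_%:E); symmetry.
have levels01 i : 0 <= level i <= 1 by exact: fine_cdfa01.
have [[c [Lc ac]]|top] := pselect (exists c, L c /\ a < c).
  apply: (@pcmed_level R n (ltn0Sn n') level _ levels01); first exact: fine_cdfa01.
    exact: count_strictly_above Lc ac.
  exact: count_weakly_above Lc ac.
have level1 i : level i = 1 by rewrite /level cdfa_top.
have agg1 : agg_level = 1 by rewrite /agg_level cdfa_top //; exact: psiL.
apply: (@pcmed_level R n (ltn0Sn n') level _ levels01); first exact: fine_cdfa01.
  rewrite agg1 mulr1 count_map (@eq_count _ _ pred0) ?count_pred0 ?ler0n // => i /=.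
  by rewrite level1 ltxx.
by rewrite agg1 mulr1 count_voters_all // => i; rewrite level1.
Qed.

End Uniqueness.

Unset Implicit Arguments.

Theorem mainTheorem14 (R : realType) (n : nat) (L : set R) :
  (0 < n)%N -> measurable L -> L !=set0 ->
  (exists psi0 : ('I_n -> probability R R) -> probability R R,
      isPAF L psi0 /\ isPropCum L psi0 /\ LevelSP L psi0 /\ proportional L psi0) /\
  (forall psi : ('I_n -> probability R R) -> probability R R,
      isPAF L psi -> LevelSP L psi -> proportional L psi -> isPropCum L psi).
Proof.
case: n => [//|n'] _ mL _; split.
  exists (@prop_cum R n'); split; first exact: prop_cum_PAF.
  split; first exact: prop_cum_PropCum.
  by split; [exact: prop_cum_LevelSP | exact: prop_cum_proportional].
move=> psi psiL psi_SP psi_prop ps psL a La.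
exact: psi_cdfa.
Qed.
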